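(* Let $\mathfrak g$ be of type $C_n$ and $J\subseteq I$. Then for $s\ge1$, $\mathbf A_{s,J}=\mathbf A^1_{s,J}\sqcup\mathbf A^2_{s,J}$ where $$\mathbf A^1_{s,J}=\{\{\beta_{i_k,j_k}\}_{1\le k\le s}\in\mathbf A^1_s:\ i_k,j_k\notin J\ \forall k\},$$ and, if $n\notin J$, $$\mathbf A^2_{s,J}=\{\{\alpha_{\ell,n}\}\cup\{\beta_{i_k,j_k}\}_{1\le k\le s-1}\in\mathbf A^2_s:\ \ell\notin J,\ \{\beta_{i_k,j_k}\}_{1\le k\le s-1}\in\mathbf A^1_{s-1,J}\},$$ while $\mathbf A^2_{s,J}=\emptyset$ if $n\in J$. Consequently $\sum_{s\ge0}\#\mathbf A_{s,J}=2^{n-\#J}$.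
   Context: Simple roots $\alpha_1,\dots,\alpha_n$ of $C_n$ numbered as in Bourbaki, $I=\{1,\dots,n\}$; $\alpha_{i,j}=\alpha_i+\dots+\alpha_j$ ($i\le j$), $\beta_{k,\ell}=\alpha_{k,n-1}+\alpha_{\ell,n}$ ($k\le\ell\le n-1$), $\theta=\beta_{1,1}$. $\mathbf A^1_s=\{\{\beta_{i_k,j_k}\}_{1\le k\le s}: i_1<\dots<i_s\le j_s<\dots<j_1\le n-1\}$, $\mathbf A^2_s=\{\{\alpha_{\ell,n}\}\cup\{\beta_{i_k,j_k}\}_{1\le k\le s-1}:\{\beta_{i_k,j_k}\}\in\mathbf A^1_{s-1},\ \ell<i_1\}$. For $\eta=\sum_i d_i(\eta)\alpha_i$, $R^+(J)=\{\alpha\in R^+:d_i(\alpha)=0\ \forall i\notin J\}$. A $J$-antichain is a subset $A\subseteq R^+$ with $A\cap R^+(J)=\emptyset$, distinct elements pairwise incomparable (order: $\lambda\le\mu$ iff $\mu-\lambda$ is a nonnegative integer combination of simple roots), and $\alpha-\alpha_j\notin R$ for $\alpha\in A$, $j\in J$. $\Phi(A)=\{\alpha\in R^+:\alpha\ge\beta$ for some $\beta\in A\}$; $A$ is abelian if $\beta_1+\beta_2\notin R$ for all $\beta_1,\beta_2\in\Phi(A)$. $\mathbf A_{s,J}$ is the set of abelian $J$-antichains with $s$ elements; $\mathbf A_{0,J}$ and $\mathbf A^1_{0,J}$ consist of the empty antichain. *)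

(* Root system of type C_n (Bourbaki numbering), encoded by
   coordinates in the basis of simple roots alpha_1, ..., alpha_n.
   Index o : 'I_n stands for the simple root alpha_(o+1). *)
From HB Require Import structures.
From mathcomp Require Import all_boot all_order all_algebra.
Set Implicit Arguments. Unset Strict Implicit. Unset Printing Implicit Defensive.
Import GRing.Theory.

(* Vectors of coefficients d_1,...,d_n; positive roots of C_n have all
   coefficients in {0,1,2}, so 'I_3 suffices for the ambient type. *)
Definition V (n : nat) := {ffun 'I_n -> 'I_3}.

Definition d n (v : V n) (o : 'I_n) : nat := v o.

Definition mkV n (f : nat -> nat) : V n := [ffun o : 'I_n => inord (f o.+1)].

(* alpha_{i,j} = alpha_i + ... + alpha_j   (1-based, i <= j) *)
Definition alpha n (i j : nat) : V n := mkV n (fun p => nat_of_bool (i <= p <= j)).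

(* beta_{k,l} = alpha_{k,n-1} + alpha_{l,n}   (1-based, k <= l <= n-1) *)
Definition beta n (k l : nat) : V n :=
  mkV n (fun p => nat_of_bool (k <= p <= n.-1) + nat_of_bool (l <= p <= n)).

Definition posR n : {set V n} :=
  [set v : V n | [exists i : 'I_n, exists j : 'I_n, (i <= j) && (v == alpha n i.+1 j.+1)]
              || [exists k : 'I_n, exists l : 'I_n,
                    [&& k <= l, l.+1 <= n.-1 & v == beta n k.+1 l.+1]]].

Definition inR n (w : 'I_n -> int) : bool :=
  [exists v in posR n, [forall o, w o == Posz (d v o)]
                     || [forall o, w o == (- Posz (d v o))%R]].

(* partial order: lambda <= mu iff mu - lambda is a nonneg. combination *)
Definition rle n (l m : V n) : bool := [forall o, d l o <= d m o].

Definition posRJ n (J : {set 'I_n}) : {set V n} :=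
  [set a in posR n | [forall o, (o \notin J) ==> (d a o == 0)]].

Definition J_antichain n (J : {set 'I_n}) (A : {set V n}) : bool :=
  [&& A \subset posR n,
      [disjoint A & posRJ J],
      [forall a in A, forall b in A, (a != b) ==> ~~ rle a b] &
      [forall a in A, forall j in J,
         ~~ inR (fun o => (Posz (d a o) - Posz (nat_of_bool (o == j)))%R)]].

Definition Phi n (A : {set V n}) : {set V n} :=
  [set a in posR n | [exists b in A, rle b a]].

Definition abelian_set n (A : {set V n}) : bool :=
  [forall x in Phi A, forall y in Phi A,
     ~~ inR (fun o => (Posz (d x o) + Posz (d y o))%R)].

Definition AsJ n (J : {set 'I_n}) (s : nat) : {set {set V n}} :=
  [set A : {set V n} | [&& J_antichain J A, abelian_set A & #|A| == s]].

(* index data for {beta_{i_k,j_k}}_{1<=k<=s}: i k, j k are 0-based, so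
   i_k = (i k).+1, j_k = (j k).+1; condition
   i_1 < ... < i_s <= j_s < ... < j_1 <= n-1 *)
Definition chainOK n s (i j : {ffun 'I_s -> 'I_n}) : bool :=
  [forall k : 'I_s, forall k' : 'I_s, (k < k') ==> ((i k < i k') && (j k' < j k))]
  && [forall k : 'I_s, (i k <= j k) && ((j k).+1 <= n.-1)].

Definition betaset n s (i j : {ffun 'I_s -> 'I_n}) : {set V n} :=
  [set beta n (i k).+1 (j k).+1 | k : 'I_s].

Definition A1 n (s : nat) : {set {set V n}} :=
  [set A : {set V n} | [exists i : {ffun 'I_s -> 'I_n}, exists j : {ffun 'I_s -> 'I_n},
                          chainOK i j && (A == betaset i j)]].

Definition A2 n (s : nat) : {set {set V n}} :=
  [set A : {set V n} | [exists l : 'I_n, exists i : {ffun 'I_s.-1 -> 'I_n},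
        exists j : {ffun 'I_s.-1 -> 'I_n},
        [&& chainOK i j, [forall k, l < i k] &
            A == alpha n l.+1 n |: betaset i j]]].

Definition A1J n (J : {set 'I_n}) (s : nat) : {set {set V n}} :=
  [set A : {set V n} | [exists i : {ffun 'I_s -> 'I_n}, exists j : {ffun 'I_s -> 'I_n},
        [&& chainOK i j, [forall k, (i k \notin J) && (j k \notin J)] &
            A == betaset i j]]].

Definition A2J n (J : {set 'I_n}) (s : nat) : {set {set V n}} :=
  if [exists o in J, o.+1 == n] then set0
  else [set A in A2 n s | [exists l : 'I_n, exists B in A1J J s.-1,
                               (l \notin J) && (A == alpha n l.+1 n |: B)]].

From HB Require Import structures.
From mathcomp Require Import all_boot all_order all_algebra zify.
Set Implicit Arguments. Unset Strict Implicit. Unset Printing Implicit Defensive.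
Import GRing.Theory.

(* Indices are 0-based: o : 'I_n stands for alpha_(o+1), and the "tail root"
   troot a b = beta_(a+1,b+1) has coordinates [a <= o < n-1] + [b <= o]; for
   b = n-1 it is alpha_(a+1,n).  The tail roots (a <= b) are exactly the positive
   roots whose alpha_n-coefficient is 1, and troot a b <= troot c e iff c <= a and
   e <= b, so antichains of tail roots are chains of strictly nested intervals.

   1. A set of positive roots is abelian iff all its members have alpha_n-coefficient
      1, i.e. are tail roots (abelian_tail_one, tail_one_abelian).
   2. A set of tail roots satisfies the J-conditions iff no endpoint lies in J
      (troot_J_endpoints, troot_J_free).  Hence A_{s,J} consists of the "tail
      families" of size s (tail_familyP, AsJP).
   3. The tail families avoiding the right endpoint n-1 form A^1_{s,J}
      (A1J_short, short_A1J); the others contain exactly one root alpha_(l,n),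
      whose removal leaves a member of A^1_{s-1,J}, i.e. they form A^2_{s,J}
      (tail_family_remove_last, top_A2J, A2J_AsJ).  This gives AsJ_split.
   4. Peeling off the outermost interval shows that a tail family is determined by
      its set of endpoints, which can be any subset of the complement of J
      (endpoints_inj, endpoints_surj); summing over sizes yields 2^(n - #J). *)

Definition troot n (a b : nat) : V n := beta n a.+1 b.+1.

Lemma d_mkV n f (o : 'I_n) : f o.+1 <= 2 -> d (mkV n f) o = f o.+1.
Proof. by move=> h; rewrite /d /mkV ffunE inordK. Qed.

Lemma d_alpha n i j (o : 'I_n) : d (alpha n i j) o = (i <= o.+1 <= j).
Proof. by rewrite /alpha d_mkV //; case: (_ && _). Qed.

Lemma d_troot n a b (o : 'I_n) : d (troot n a b) o = ((a <= o) && (o < n.-1)) + (b <= o).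
Proof. by rewrite /troot /beta d_mkV; have := ltn_ord o; lia. Qed.

Lemma V_ext n (v w : V n) : (forall o, d v o = d w o) -> v = w.
Proof. by move=> h; apply/ffunP => o; apply: val_inj; apply: h. Qed.

Lemma eq_ordE n (x y : 'I_n) : (x == y) = (x == y :> nat).
Proof. by []. Qed.

Lemma ord_le_pred n (l : 'I_n) : l <= n.-1.
Proof. by have := ltn_ord l; lia. Qed.

Lemma alpha_troot n a : a < n -> alpha n a.+1 n = troot n a n.-1.
Proof. by move=> ha; apply: V_ext => o; rewrite d_alpha d_troot; have := ltn_ord o; lia. Qed.

Lemma inRP n (w : 'I_n -> int) : inR w -> exists2 v, v \in posR n &
  ((forall o, w o = Posz (d v o)) \/ (forall o, w o = - Posz (d v o)))%R.
Proof.
case/existsP => v /andP [hv /orP [/forallP h|/forallP h]]; exists v => //;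
 [left|right] => o; apply/eqP/h.
Qed.

Lemma inRI n (w : 'I_n -> int) v : v \in posR n -> (forall o, w o = Posz (d v o)) -> inR w.
Proof.
move=> hv h; apply/existsP; exists v; rewrite hv /=; apply/orP; left.
by apply/forallP => o; rewrite h.
Qed.

Lemma posRP n v : v \in posR n ->
  (exists i j : 'I_n, i <= j /\ v = alpha n i.+1 j.+1) \/
  (exists a b : 'I_n, a <= b /\ v = troot n a b).
Proof.
rewrite inE => /orP [/existsP [i /existsP [j /andP [h /eqP ->]]]|
  /existsP [a /existsP [b /and3P [h _ /eqP ->]]]].
- by left; exists i, j.
- by right; exists a, b.
Qed.

Lemma posR_alpha n i j : 0 < i <= j -> j <= n -> alpha n i j \in posR n.
Proof.
case: i => // i /andP [_ hij]; case: j hij => // j hij hj.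
rewrite inE; apply/orP; left; apply/existsP.
exists (Ordinal (leq_ltn_trans (hij : i <= j) hj)); apply/existsP; exists (Ordinal hj).
by rewrite /= eqxx andbT.
Qed.

Lemma posR_troot n a b : a <= b -> b < n -> troot n a b \in posR n.
Proof.
move=> hab hb; case: (ltnP b n.-1) => hb'.
  rewrite inE; apply/orP; right; apply/existsP; exists (Ordinal (leq_ltn_trans hab hb)).
  by apply/existsP; exists (Ordinal hb); rewrite /= hab hb' eqxx.
have -> : b = n.-1 by lia.
rewrite -alpha_troot; last exact: leq_ltn_trans hab hb.
by apply: posR_alpha; lia.
Qed.

Lemma inR_sub_simple n (v u : V n) (j : 'I_n) : u \in posR n ->
  (forall o, d v o = d u o + (o == j)) ->
  inR (fun o => Posz (d v o) - Posz (o == j))%R.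
Proof. by move=> hu h; apply: (inRI hu) => o; rewrite h PoszD addrK. Qed.

Lemma rle_refl n (v : V n) : rle v v.
Proof. by apply/forallP. Qed.

Lemma rle_troot n a b c e : a <= b -> b < n -> c <= e -> e < n ->
  rle (troot n a b) (troot n c e) = (c <= a) && (e <= b).
Proof.
move=> hab hb hce he; apply/forallP/idP => [h | h o].
- have := h (Ordinal (leq_ltn_trans hab hb)); have := h (Ordinal hb).
  rewrite !d_troot /=; lia.
- rewrite !d_troot; have := ltn_ord o; lia.
Qed.

Lemma troot_inj n a b c e : a <= b -> b < n -> c <= e -> e < n ->
  troot n a b = troot n c e -> a = c /\ b = e.
Proof.
move=> hab hb hce he eq_ace.
have : rle (troot n a b) (troot n c e) by rewrite eq_ace rle_refl.
have : rle (troot n c e) (troot n a b) by rewrite eq_ace rle_refl.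
by rewrite !rle_troot //; lia.
Qed.

Lemma antichain_troot_order n (A : {set V n}) (a b c e : 'I_n) :
  {in A &, forall v w, v != w -> ~~ rle v w} -> a <= b -> c <= e ->
  troot n a b \in A -> troot n c e \in A -> a <= c ->
  (a = c :> nat /\ b = e :> nat) \/ (a < c /\ e < b).
Proof.
move=> hanti hab hce hv hw hac.
have [eq_vw|ne_vw] := eqVneq (troot n a b) (troot n c e).
  by left; apply: troot_inj eq_vw.
right; have := hanti _ _ hv hw ne_vw; have := hanti _ _ hw hv; rewrite eq_sym ne_vw.
by rewrite !rle_troot //; lia.
Qed.

Lemma Phi_ge n (A : {set V n}) v x : v \in A -> x \in posR n -> rle v x -> x \in Phi A.
Proof. by move=> hv hx hvx; rewrite inE hx; apply/existsP; exists v; rewrite hv. Qed.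

Lemma tail_troot n a b (o : 'I_n) : (o : nat) = n.-1 -> a <= b -> b < n -> d (troot n a b) o = 1.
Proof. by move=> ho hab hb; rewrite d_troot ho; have := ltn_ord o; lia. Qed.

Lemma posR_tail_le1 n v (o : 'I_n) : (o : nat) = n.-1 -> v \in posR n -> d v o <= 1.
Proof.
move=> ho /posRP [[i [j [hij ->]]]|[a [b [hab ->]]]]; last by rewrite tail_troot.
by rewrite d_alpha; case: (_ && _).
Qed.

Lemma posR_tail_one n v (o : 'I_n) : (o : nat) = n.-1 -> v \in posR n -> d v o = 1 ->
  exists a b : 'I_n, a <= b /\ v = troot n a b.
Proof.
move=> ho /posRP [[i [j [hij ev]]]|//]; rewrite ev d_alpha ho => hj.
have ej : (j : nat) = n.-1 by have := ltn_ord j; have := ltn_ord o; lia.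
exists i, j; split => //; rewrite ej -alpha_troot ?prednK //.
by have := ltn_ord o; lia.
Qed.

(* In an abelian set every root has alpha_n-coefficient 1: otherwise
   alpha_(i,j) (j < n) and the tail root beta_(i,j+1) above it both lie in Phi(A)
   and add up to the root beta_(i,i). *)
Lemma abelian_tail_one n (A : {set V n}) v (o : 'I_n) : A \subset posR n -> abelian_set A ->
  v \in A -> (o : nat) = n.-1 -> d v o = 1.
Proof.
move=> hA hab hv ho; have hvR := subsetP hA v hv.
case: (posRP hvR) => [[i [j [hij ev]]]|[a [b [hab' ->]]]]; last by rewrite tail_troot.
case: (ltnP j n.-1) => hj; last first.
  by rewrite ev d_alpha ho; have := ltn_ord o; have := ltn_ord j; lia.
have hjn : j.+1 < n by have := ltn_ord o; lia.
set y := troot n i j.+1.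
have hyP : y \in Phi A.
  apply: Phi_ge hv (posR_troot (leqW hij) hjn) _.
  by apply/forallP => o'; rewrite ev d_alpha d_troot; have := ltn_ord o'; lia.
have hvP : v \in Phi A := Phi_ge hv hvR (rle_refl v).
have : ~~ inR (fun o' => Posz (d v o') + Posz (d y o'))%R.
  by move/forallP: hab => /(_ v); rewrite hvP => /forallP /(_ y); rewrite hyP.
case/negP; apply: (inRI (posR_troot (leqnn i) (ltn_ord i))) => o'.
by rewrite -PoszD ev d_alpha !d_troot; congr Posz; have := ltn_ord o'; lia.
Qed.

(* Conversely, if every root of A has alpha_n-coefficient 1, then sums of elements
   of Phi(A) have alpha_n-coefficient >= 2 and are not roots. *)
Lemma tail_one_abelian n (A : {set V n}) (o : 'I_n) : (o : nat) = n.-1 ->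
  (forall v, v \in A -> v \in posR n /\ d v o = 1) -> abelian_set A.
Proof.
move=> ho hA.
have tail_pos x : x \in Phi A -> 1 <= d x o.
  rewrite inE => /andP [_ /existsP [v /andP [hv /forallP /(_ o)]]].
  by rewrite (proj2 (hA v hv)).
apply/forallP => x; apply/implyP => hx; apply/forallP => y; apply/implyP => hy.
apply/negP => /inRP [u hu [/(_ o) h | /(_ o) h]]; move/eqP: h;
  have := tail_pos x hx; have := tail_pos y hy; have := posR_tail_le1 ho hu.
- by rewrite -PoszD eqz_nat; lia.
- by rewrite -subr_eq0 opprK -!PoszD eqz_nat; lia.
Qed.

(* troot a b - alpha_j is not a root when j is not an endpoint: compare the
   coordinates at a, j and b with those of the two kinds of positive roots. *)
Lemma troot_sub_simple_notin_R n (a b j : 'I_n) : a <= b -> j != a -> j != b ->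
  ~~ inR (fun o : 'I_n => Posz (d (troot n a b) o) - Posz (o == j))%R.
Proof.
move=> hab; rewrite !eq_ordE => hja hjb; apply/negP => /inRP [u hu [h|h]]; last first.
  (* not a negative root: the coordinate at a is positive *)
  by have := h a; rewrite eq_ordE d_troot; have := ltn_ord b; lia.
have hu' o : d (troot n a b) o = d u o + (o == j :> nat) by have := h o; rewrite eq_ordE; lia.
have := ltn_ord b; have := ltn_ord j.
have [hja'|hja'|eja] := ltngtP j a; last by lia.
  (* j < a: the coordinate at j would be -1 *)
  by have := hu' j; rewrite eqxx d_troot; lia.
have [hjb'|hjb'|ejb] := ltngtP j b; last by lia.
- (* a < j < b: coefficients 1, 0, >= 1 at a, j, b fit no positive root *)
  move: (hu' a) (hu' j) (hu' b); rewrite !d_troot eqxx.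
  case: (posRP hu) => [[i [i' [_ ->]]]|[c [e [_ ->]]]]; rewrite ?d_alpha ?d_troot; lia.
- (* b < j: coefficient 2 at b, followed by a smaller one at j, fits no positive root *)
  move: (hu' j) (hu' b); rewrite !d_troot eqxx.
  case: (posRP hu) => [[i [i' [_ ->]]]|[c [e [_ ->]]]]; rewrite ?d_alpha ?d_troot; lia.
Qed.

Lemma troot_sub_left_in_R n (a b : 'I_n) : a <= b -> a < n.-1 ->
  inR (fun o : 'I_n => Posz (d (troot n a b) o) - Posz (o == a))%R.
Proof.
move=> hab ha; have [hab'|eab] := ltnP a b.
- apply: (inR_sub_simple (posR_troot hab' (ltn_ord b))) => o.
  by rewrite eq_ordE !d_troot; lia.
- have ha1 : a.+1 < n by lia.
  apply: (inR_sub_simple (posR_troot (leqnSn a) ha1)) => o.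
  by rewrite eq_ordE !d_troot; lia.
Qed.

Lemma troot_sub_right_in_R n (a b : 'I_n) : a < b ->
  inR (fun o : 'I_n => Posz (d (troot n a b) o) - Posz (o == b))%R.
Proof.
move=> hab; have [hb|hb] := ltnP b n.-1.
- have hb1 : b.+1 < n by lia.
  apply: (inR_sub_simple (posR_troot (leqW (ltnW hab)) hb1)) => o.
  by rewrite eq_ordE !d_troot; lia.
- have : 0 < a.+1 <= n.-1 by have := ltn_ord b; lia.
  move/posR_alpha => /(_ n (leq_pred n)) hu; apply: (inR_sub_simple hu) => o.
  by rewrite eq_ordE d_troot d_alpha; have := ltn_ord o; have := ltn_ord b; lia.
Qed.

Lemma troot_J_endpoints n (J : {set 'I_n}) (a b : 'I_n) : a <= b ->
  troot n a b \notin posRJ J ->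
  (forall j, j \in J -> ~~ inR (fun o : 'I_n => Posz (d (troot n a b) o) - Posz (o == j))%R) ->
  a \notin J /\ b \notin J.
Proof.
move=> hab hRJ hJ.
have haJ : a \notin J.
  apply/negP => haJ; have [ha|ha] := ltnP a n.-1.
    by move/negP: (hJ a haJ); apply; apply: troot_sub_left_in_R.
  move/negP: hRJ; apply; rewrite inE posR_troot //=.
  apply/forallP => o; apply/implyP; apply: contraNT => ho.
  suff -> : o = a by [].
  by apply/ord_inj; move: ho; rewrite d_troot; have := ltn_ord o; have := ltn_ord b; lia.
split => //; apply/negP => hbJ; move/negP: (hJ b hbJ); apply.
apply: troot_sub_right_in_R; rewrite ltn_neqAle hab andbT.
by apply: contraNneq haJ => /ord_inj ->.
Qed.

Lemma troot_J_free n (J : {set 'I_n}) (a b : 'I_n) : a <= b -> a \notin J -> b \notin J ->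
  troot n a b \notin posRJ J /\
  (forall j, j \in J -> ~~ inR (fun o : 'I_n => Posz (d (troot n a b) o) - Posz (o == j))%R).
Proof.
move=> hab haJ hbJ; split.
- rewrite inE negb_and; apply/orP; right; apply/forallPn; exists a.
  by rewrite negb_imply haJ /= d_troot; have := ltn_ord b; lia.
- move=> j hj; apply: troot_sub_simple_notin_R => //.
  + by apply: contraTneq hj => ->.
  + by apply: contraTneq hj => ->.
Qed.

Definition tail_family n (J : {set 'I_n}) (A : {set V n}) : Prop :=
  (forall v, v \in A -> exists a b : 'I_n, [/\ a <= b, a \notin J, b \notin J & v = troot n a b])
  /\ {in A &, forall v w, v != w -> ~~ rle v w}.

Lemma tail_family_sub n (J : {set 'I_n}) (A B : {set V n}) : B \subset A ->
  tail_family J A -> tail_family J B.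
Proof.
move=> /subsetP hBA [hg hanti]; split; first by move=> v /hBA /hg.
by move=> v w /hBA hv /hBA hw; apply: hanti.
Qed.

Lemma tail_familyP n (J : {set 'I_n}) (A : {set V n}) : 0 < n ->
  J_antichain J A && abelian_set A <-> tail_family J A.
Proof.
move=> hn; have hl : n.-1 < n by rewrite ltn_predL.
have ho : (Ordinal hl : nat) = n.-1 by [].
split.
- case/andP => /and4P [hA hdis /forallP hanti /forallP hJ] hab; split; last first.
    move=> v w hv hw hvw; move: (hanti v); rewrite hv /= => /forallP /(_ w).
    by rewrite hw hvw.
  move=> v hv; have hvR := subsetP hA v hv.
  have [a [b [hab' ev]]] := posR_tail_one ho hvR (abelian_tail_one hA hab hv ho).
  have hvJ : v \notin posRJ J by rewrite (disjointFr hdis hv).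
  have hJv j : j \in J -> ~~ inR (fun o : 'I_n => Posz (d v o) - Posz (o == j))%R.
    by move=> hj; move: (hJ v); rewrite hv /= => /forallP /(_ j); rewrite hj.
  rewrite ev in hvJ hJv; have [haJ hbJ] := troot_J_endpoints hab' hvJ hJv.
  by exists a, b.
- case=> hg hanti; apply/andP; split; last first.
    apply: (tail_one_abelian ho) => v /hg [a [b [hab _ _ ->]]].
    by rewrite posR_troot ?tail_troot.
  apply/and4P; split.
  + by apply/subsetP => v /hg [a [b [hab _ _ ->]]]; apply: posR_troot.
  + apply/pred0P => v /=; apply/negbTE/nandP.
    case: (boolP (v \in A)) => hv; [right|by left].
    by have [a [b [hab ha hb ->]]] := hg v hv; case: (troot_J_free hab ha hb).
  + apply/forallP => v; apply/implyP => hv; apply/forallP => w; apply/implyP => hw.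
    by apply/implyP; apply: hanti.
  + apply/forallP => v; apply/implyP => hv; apply/forallP => j; apply/implyP => hj.
    have [a [b [hab ha hb ->]]] := hg v hv.
    by case: (troot_J_free hab ha hb) => _; apply.
Qed.

Lemma AsJP n (J : {set 'I_n}) A s : 0 < n -> A \in AsJ J s <-> tail_family J A /\ #|A| = s.
Proof.
move=> hn; rewrite inE andbA; split.
- by case/andP => /(tail_familyP J A hn) ? /eqP.
- by case=> /(tail_familyP J A hn) -> ->; rewrite eqxx.
Qed.

Section Chains.

Variables (n s : nat) (i j : {ffun 'I_s -> 'I_n}).

Hypothesis chain_ij : chainOK i j.

Lemma chain_bounds (k : 'I_s) : i k <= j k /\ j k < n.-1.
Proof. by case/andP: chain_ij => _ /forallP /(_ k) /andP. Qed.

Lemma chain_order (k k' : 'I_s) : k < k' -> i k < i k' /\ j k' < j k.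
Proof.
by case/andP: chain_ij => /forallP /(_ k) /forallP /(_ k') /implyP h _ /h /andP.
Qed.

Lemma chain_antichain : {in betaset i j &, forall v w, v != w -> ~~ rle v w}.
Proof.
move=> v w /imsetP [k _ ->] /imsetP [k' _ ->] ne_vw.
have [h1 h2] := chain_bounds k; have [h1' h2'] := chain_bounds k'.
rewrite rle_troot ?ltn_ord //.
have [hk|hk|/ord_inj ekk] := ltngtP k k'; last by rewrite ekk eqxx in ne_vw.
- by have := chain_order hk; lia.
- by have := chain_order hk; lia.
Qed.

Lemma card_betaset : #|betaset i j| = s.
Proof.
rewrite card_imset ?card_ord // => k k' eq_kk'.
have [h1 _] := chain_bounds k; have [h1' _] := chain_bounds k'.
have [ei _] := troot_inj h1 (ltn_ord _) h1' (ltn_ord _) eq_kk'.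
apply/eqP; case: (ltngtP k k') => [hk|hk|/val_inj -> //]; have := chain_order hk; lia.
Qed.

Lemma mem_betaset (a b : 'I_n) : a <= b -> troot n a b \in betaset i j ->
  exists k, a = i k /\ b = j k.
Proof.
move=> hab /imsetP [k _ eq_ab]; exists k; have [hk _] := chain_bounds k.
by have [/ord_inj -> /ord_inj ->] := troot_inj hab (ltn_ord b) hk (ltn_ord _) eq_ab.
Qed.

End Chains.

Definition short_family n (J : {set 'I_n}) (A : {set V n}) : Prop :=
  tail_family J A /\ forall a b : 'I_n, a <= b -> troot n a b \in A -> b < n.-1.

Lemma A1J_short n (J : {set 'I_n}) s A : A \in A1J J s -> short_family J A /\ #|A| = s.
Proof.
rewrite inE => /existsP [i /existsP [j /and3P [hc /forallP hJ /eqP ->]]].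
split; last exact: card_betaset.
split; last by move=> a b hab /(mem_betaset hc hab) [k [_ ->]]; case: (chain_bounds hc k).
split; last exact: chain_antichain.
move=> v /imsetP [k _ ->]; exists (i k), (j k).
by have [hk _] := chain_bounds hc k; case/andP: (hJ k).
Qed.

Lemma tail_family_graph n (J : {set 'I_n}) (A : {set V n}) : tail_family J A ->
  exists T : {set 'I_n}, exists p : 'I_n -> 'I_n,
    [/\ {in T, forall a : 'I_n, a <= p a}, A = [set troot n a (p a) | a : 'I_n in T]
      & #|T| = #|A|].
Proof.
move=> [hg hanti].
pose T := [set a : 'I_n | [exists b : 'I_n, (a <= b) && (troot n a b \in A)]].
pose p (a : 'I_n) := odflt a [pick b : 'I_n | (a <= b) && (troot n a b \in A)].
have hp (a : 'I_n) : a \in T -> (a <= p a) && (troot n a (p a) \in A).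
  by rewrite inE /p => /existsP [b hb]; case: pickP => [//|/(_ b)]; rewrite hb.
have eqA : A = [set troot n a (p a) | a : 'I_n in T].
  apply/setP => v; apply/idP/imsetP => [hv|[a /hp /andP [_ ha] ->] //].
  have [a [b [hab _ _ ev]]] := hg v hv.
  have hT : a \in T by rewrite inE; apply/existsP; exists b; rewrite hab -ev hv.
  exists a => //; have /andP [hap hpa] := hp a hT; rewrite ev in hv *.
  by case: (antichain_troot_order hanti hab hap hv hpa (leqnn a)) => [[_ /ord_inj ->] //|]; lia.
exists T, p; split => //; first by move=> a /hp /andP [].
rewrite eqA card_in_imset // => a a' /hp /andP [ha _] /hp /andP [ha' _] eq_aa'.
by have [/ord_inj] := troot_inj ha (ltn_ord _) ha' (ltn_ord _) eq_aa'.
Qed.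

Lemma sorted_enum_ord n (T : {set 'I_n}) : sorted (fun x y : 'I_n => x < y) (enum T).
Proof.
rewrite /enum_mem -enumT; apply: sorted_filter; first exact: ltn_trans.
by have := iota_ltn_sorted 0 n; rewrite -val_enum_ord sorted_map.
Qed.

(* ... and every short tail family of size s is in A^1_{s,J}: list the left
   endpoints increasingly; nestedness makes the right endpoints decrease. *)
Lemma short_A1J n (J : {set 'I_n}) (A : {set V n}) s : 0 < n -> short_family J A ->
  #|A| = s -> A \in A1J J s.
Proof.
move=> hn [hA hshort] cardA; have [hg hanti] := hA; pose x0 := Ordinal hn.
have [T [p [hp eqA cardT]]] := tail_family_graph hA.
pose i := [ffun k : 'I_s => nth x0 (enum T) k].
pose j := [ffun k : 'I_s => p (i k)].
have hiT k : i k \in T by rewrite ffunE -mem_enum mem_nth // -cardE cardT cardA.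
have hmem k : troot n (i k) (j k) \in A.
  by rewrite eqA [j k]ffunE; apply/imsetP; exists (i k); rewrite ?hiT.
have hij k : i k <= j k by rewrite [j k]ffunE; apply: hp.
have i_incr (k k' : 'I_s) : k < k' -> i k < i k'.
  move=> hk; rewrite !ffunE.
  have Tsize : #|T| = size (enum T) by rewrite cardE.
  apply: (sorted_ltn_nth (leT := fun x y : 'I_n => x < y) ltn_trans x0 (sorted_enum_ord T));
    by rewrite // inE -Tsize cardT cardA.
have hc : chainOK i j.
  apply/andP; split; apply/forallP => k; last by rewrite hij; apply: hshort (hmem k).
  apply/forallP => k'; apply/implyP => hk; rewrite i_incr //=.
  have ik_lt := i_incr _ _ hk.
  have := antichain_troot_order hanti (hij k) (hij k') (hmem k) (hmem k') (ltnW ik_lt).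
  by case=> [[eik _]|[]//]; rewrite eik ltnn in ik_lt.
rewrite inE; apply/existsP; exists i; apply/existsP; exists j; rewrite hc /=; apply/andP; split.
- apply/forallP => k; have [a [b [hab ha hb ev]]] := hg _ (hmem k).
  have [/ord_inj -> /ord_inj ->] := troot_inj (hij k) (ltn_ord _) hab (ltn_ord _) ev.
  by rewrite ha hb.
- rewrite eq_sym eqEcard card_betaset // cardA leqnn andbT.
  by apply/subsetP => v /imsetP [k _ ->]; apply: hmem.
Qed.

Lemma tail_family_remove_last n (J : {set 'I_n}) A (l : 'I_n) : tail_family J A ->
  troot n l n.-1 \in A ->
  [/\ l \notin J, ~~ [exists o in J, o.+1 == n], short_family J (A :\ troot n l n.-1)
    & forall a b : 'I_n, a <= b -> troot n a b \in A :\ troot n l n.-1 -> l < a].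
Proof.
move=> hA hl; have [hg hanti] := hA; have hn : n.-1 < n by have := ltn_ord l; lia.
have [a [b [hab haJ hbJ ev]]] := hg _ hl.
have [/ord_inj ela elb] := troot_inj (ord_le_pred l) hn hab (ltn_ord b) ev.
have left_gt (a' b' : 'I_n) : a' <= b' -> troot n a' b' \in A :\ troot n l n.-1 ->
    l < a' /\ b' < n.-1.
  move=> hab' /setD1P [hne hv]; have hl_top : l <= Ordinal hn := ord_le_pred l.
  have hb_le := ord_le_pred b'.
  have [hla|hla] := leqP l a'.
  - case: (antichain_troot_order hanti hl_top hab' hl hv hla) => /= [[ela' ebl']|];
      [by move: hne; rewrite -ela' -ebl' eqxx | lia].
  - by case: (antichain_troot_order hanti hab' hl_top hv hl (ltnW hla)) => /=; lia.
split => //.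
- by rewrite ela.
- apply/existsP => -[o /andP [hoJ /eqP ho]].
  by move: hbJ; rewrite (_ : b = o) ?hoJ //; apply: ord_inj; lia.
- split; first exact: tail_family_sub (subD1set _ _) hA.
  by move=> a' b' hab' /(left_gt _ _ hab') [].
- by move=> a' b' hab' /(left_gt _ _ hab') [].
Qed.

Lemma A2_antichain n s A : 0 < n -> 1 <= s -> A \in A2 n s ->
  {in A &, forall v w, v != w -> ~~ rle v w} /\ #|A| = s.
Proof.
move=> hn hs; rewrite inE.
case/existsP => l /existsP [i /existsP [j /and3P [hc /forallP hl /eqP eqA]]].
have hn1 : n.-1 < n by rewrite ltn_predL.
rewrite alpha_troot // in eqA; rewrite eqA; split.
- move=> v w; have hl_le := ord_le_pred l.
  case/setU1P => [->|hv]; case/setU1P => [->|hw]; rewrite ?eqxx // => ne_vw.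
  + case/imsetP: hw ne_vw => k _ -> _; have [hk hjk] := chain_bounds hc k.
    by rewrite rle_troot //; have := hl k; lia.
  + case/imsetP: hv ne_vw => k _ -> _; have [hk hjk] := chain_bounds hc k.
    by rewrite rle_troot //; lia.
  + exact: chain_antichain hc _ _ hv hw ne_vw.
- have top_notin : troot n l n.-1 \notin betaset i j.
    apply/negP => /(@mem_betaset _ _ i j hc l (Ordinal hn1) (ord_le_pred l)) [k [_ ejk]].
    by have [_] := chain_bounds hc k; rewrite -ejk ltnn.
  by rewrite cardsU1 top_notin card_betaset // add1n prednK.
Qed.

Lemma top_A2J n (J : {set 'I_n}) s A (l : 'I_n) : 0 < n -> 1 <= s ->
  tail_family J A -> #|A| = s -> troot n l n.-1 \in A -> A \in A2J J s.
Proof.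
move=> hn hs hA cardA hl.
have [hlJ hlast hshort hleft] := tail_family_remove_last hA hl.
set B := A :\ troot n l n.-1.
have cardB : #|B| = s.-1.
  by move: cardA; rewrite (cardsD1 (troot n l n.-1) A) hl add1n => <-.
have hB : B \in A1J J s.-1 := short_A1J hn hshort cardB.
have eqA : A = alpha n l.+1 n |: B by rewrite alpha_troot ?setD1K.
rewrite /A2J (negbTE hlast) !inE; apply/andP; split; last first.
  by apply/existsP; exists l; apply/existsP; exists B; rewrite hB hlJ eqA eqxx.
move: hB; rewrite inE => /existsP [i /existsP [j /and3P [hc _ /eqP eqB]]].
apply/existsP; exists l; apply/existsP; exists i; apply/existsP; exists j.
rewrite hc eqA eqB eqxx andbT /=; apply/forallP => k; have [hk _] := chain_bounds hc k.
by apply: hleft hk _; rewrite -/B eqB; apply/imsetP; exists k.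
Qed.

Lemma A2J_AsJ n (J : {set 'I_n}) s A : 0 < n -> 1 <= s -> A \in A2J J s -> A \in AsJ J s.
Proof.
move=> hn hs; rewrite /A2J; case: ifP => [_|hlast]; first by rewrite inE.
rewrite inE => /andP [hA2 /existsP [l /existsP [B /andP [hB /andP [hlJ /eqP eqA]]]]].
have [hanti cardA] := A2_antichain hn hs hA2.
apply/(AsJP J A s hn); split => //; split => // v.
have hn1 : n.-1 < n by rewrite ltn_predL.
rewrite eqA alpha_troot // => /setU1P [->|hv].
- exists l, (Ordinal hn1); split => //; first exact: ord_le_pred.
  apply: contraFN hlast => htop; apply/existsP; exists (Ordinal hn1).
  by rewrite htop /= prednK.
- by have [[[hg _] _] _] := A1J_short hB; apply: hg.
Qed.

Lemma AsJ_split n (J : {set 'I_n}) s : 0 < n -> 1 <= s -> AsJ J s = A1J J s :|: A2J J s.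
Proof.
move=> hn hs; apply/setP => A; rewrite in_setU; apply/idP/orP.
- case/(AsJP J A s hn) => hA cardA.
  case: (pickP (fun l : 'I_n => troot n l n.-1 \in A)) => [l hl|no_top].
    by right; apply: top_A2J hl.
  left; apply: short_A1J cardA => //; split => // a b hab hv.
  rewrite ltn_neqAle ord_le_pred andbT; apply: contraFN (no_top a) => /eqP eb.
  by rewrite /= -eb.
- by case=> [/A1J_short [[hf _] cardA] | /(A2J_AsJ hn hs) //]; apply/(AsJP J A s hn).
Qed.

(* ... and the union is disjoint, since only A^2_{s,J} contains alpha_(l,n)'s. *)
Lemma A1J_A2J_disjoint n (J : {set 'I_n}) s : 0 < n -> [disjoint A1J J s & A2J J s].
Proof.
move=> hn; apply/pred0P => A /=; apply/negbTE/negP => /andP [/A1J_short [[_ hshort] _]].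
rewrite /A2J; case: ifP => _; first by rewrite inE.
rewrite inE => /andP [_ /existsP [l /existsP [B /andP [_ /andP [_ /eqP eqA]]]]].
have hn1 : n.-1 < n by rewrite ltn_predL.
have := hshort l (Ordinal hn1) (ord_le_pred l).
by rewrite eqA alpha_troot // setU11 ltnn => /(_ isT).
Qed.

Definition endpoints n (A : {set V n}) : {set 'I_n} :=
  [set o : 'I_n | [exists v in A, exists c : 'I_n, exists e : 'I_n,
     [&& c <= e, v == troot n c e & (o == c) || (o == e)]]].

Lemma endpoints_of n (A : {set V n}) (c e : 'I_n) : troot n c e \in A -> c <= e ->
  c \in endpoints A /\ e \in endpoints A.
Proof.
move=> hv hce; split; rewrite inE; apply/existsP; exists (troot n c e); rewrite hv /=;
  apply/existsP; exists c; apply/existsP; exists e; by rewrite hce !eqxx ?orbT.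
Qed.

Lemma endpointsP n (A : {set V n}) o : o \in endpoints A ->
  exists c e : 'I_n, [/\ c <= e, troot n c e \in A & o = c \/ o = e].
Proof.
rewrite inE => /existsP [v /andP [hv /existsP [c /existsP [e /and3P [hce /eqP ev ho]]]]].
exists c, e; split; rewrite -?ev //.
by case/orP: ho => /eqP ->; [left|right].
Qed.

Lemma endpoints_set0 n : endpoints (set0 : {set V n}) = set0.
Proof.
apply/setP => o; rewrite in_set0; apply/negbTE/negP => /endpointsP [c [e [_]]].
by rewrite inE.
Qed.

Lemma endpoints_setU1 n (A : {set V n}) (a b : 'I_n) : a <= b ->
  endpoints (troot n a b |: A) = a |: (b |: endpoints A).
Proof.
move=> hab; apply/setP => o; rewrite !in_setU1; apply/idP/idP.
- case/endpointsP => c [e [hce /setU1P [ev|hv] hoce]].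
  + have [/ord_inj ec /ord_inj ee] := troot_inj hce (ltn_ord e) hab (ltn_ord b) ev.
    by case: hoce => ->; rewrite ?ec ?ee eqxx ?orbT.
  + have [hc he] := endpoints_of hv hce.
    by case: hoce => ->; rewrite ?hc ?he !orbT.
- have [ha hb] := endpoints_of (setU11 (troot n a b) A) hab.
  case/or3P => [/eqP -> // | /eqP -> // |].
  case/endpointsP => c [e [hce hv hoce]].
  have [hc he] := endpoints_of (setU1r (troot n a b) hv) hce.
  by case: hoce => ->.
Qed.

Lemma outer_root n (J : {set 'I_n}) A (a b : 'I_n) : tail_family J A ->
  a \in endpoints A -> b \in endpoints A -> {in endpoints A, forall x : 'I_n, a <= x <= b} ->
  troot n a b \in A /\
  forall c e : 'I_n, c <= e -> troot n c e \in A :\ troot n a b -> a < c /\ e < b.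
Proof.
move=> [_ hanti] ha hb hbound.
have [e1 [hae1 he1]] : exists e1 : 'I_n, a <= e1 /\ troot n a e1 \in A.
  case: (endpointsP ha) => c [e [hce hv [ea|ea]]]; rewrite -ea in hv hce; first by exists e.
  have [hc _] := endpoints_of hv hce; have /andP [hac _] := hbound c hc.
  have eca : c = a by apply: ord_inj; lia.
  by rewrite eca in hv; exists a.
have [c1 [hc1b hc1]] : exists c1 : 'I_n, c1 <= b /\ troot n c1 b \in A.
  case: (endpointsP hb) => c [e [hce hv [eb|eb]]]; rewrite -eb in hv hce; last by exists c.
  have [_ he] := endpoints_of hv hce; have /andP [_ heb] := hbound e he.
  have eeb : e = b by apply: ord_inj; lia.
  by rewrite eeb in hv; exists b.
have /andP [hac1 _] := hbound c1 (proj1 (endpoints_of hc1 hc1b)).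
have /andP [_ he1b] := hbound e1 (proj2 (endpoints_of he1 hae1)).
have e1b : e1 = b.
  by apply: ord_inj; case: (antichain_troot_order hanti hae1 hc1b he1 hc1 hac1); lia.
rewrite e1b in he1 hae1; split => // c e hce /setD1P [hne hv].
have [hc he] := endpoints_of hv hce.
have /andP [hac _] := hbound c hc; have /andP [_ heb] := hbound e he.
case: (antichain_troot_order hanti hae1 hce he1 hv hac) => [[ec ee] | //].
by move: hne; rewrite (ord_inj ec) (ord_inj ee) eqxx.
Qed.

Lemma inner_endpoints n (A : {set V n}) (a b : 'I_n) :
  (forall c e : 'I_n, c <= e -> troot n c e \in A -> a < c /\ e < b) ->
  {in endpoints A, forall x : 'I_n, a < x < b}.
Proof.
move=> hin x /endpointsP [c [e [hce hv hx]]]; have [hac heb] := hin c e hce hv.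
by case: hx => ->; lia.
Qed.

Lemma endpoints_remove_outer n (A : {set V n}) (a b : 'I_n) : a <= b -> troot n a b \in A ->
  (forall c e : 'I_n, c <= e -> troot n c e \in A :\ troot n a b -> a < c /\ e < b) ->
  endpoints (A :\ troot n a b) = endpoints A :\ a :\ b.
Proof.
move=> hab hv hin; have hin' := inner_endpoints hin.
rewrite -{2}(setD1K hv) endpoints_setU1 //; apply/setP => o.
rewrite !in_setD1 !in_setU1 !eq_ordE.
by case: (boolP (o \in endpoints _)) => ho; [have := hin' o ho | ]; lia.
Qed.

Lemma endpoints0_empty n (J : {set 'I_n}) (A : {set V n}) : tail_family J A ->
  endpoints A = set0 -> A = set0.
Proof.
move=> [hg _] hA; apply/setP => v; rewrite in_set0; apply/negbTE/negP => hv.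
have [a [b [hab _ _ ev]]] := hg _ hv; rewrite ev in hv.
by have [ha _] := endpoints_of hv hab; rewrite hA in_set0 in ha.
Qed.

Lemma card_setD2_lt (T : finType) (S : {set T}) a b : a \in S -> #|S :\ a :\ b| < #|S|.
Proof. by move=> ha; rewrite (cardsD1 a S) ha add1n ltnS; apply/subset_leq_card/subD1set. Qed.

Lemma set_extremes n (S : {set 'I_n}) x0 : x0 \in S ->
  exists a b : 'I_n, [/\ a \in S, b \in S & {in S, forall x : 'I_n, a <= x <= b}].
Proof.
move=> hx0; case: (arg_minnP (fun i : 'I_n => i : nat) hx0) => a ha amin.
case: (arg_maxnP (fun i : 'I_n => i : nat) hx0) => b hb bmax.
by exists a, b; split => // x hx; rewrite amin //; apply: bmax.
Qed.

(* A tail family is determined by its endpoints (induction, peeling the outer root). *)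
Lemma endpoints_inj n (J : {set 'I_n}) (A A' : {set V n}) :
  tail_family J A -> tail_family J A' -> endpoints A = endpoints A' -> A = A'.
Proof.
have [m] := ubnP #|endpoints A|; elim: m A A' => // m IH A A' hm hA hA' eqE.
have [E0|[x hx]] := set_0Vmem (endpoints A).
  by rewrite (endpoints0_empty hA E0) (endpoints0_empty hA' (etrans (esym eqE) E0)).
have [a [b [ha hb hbound]]] := set_extremes hx.
have [hv hin] := outer_root hA ha hb hbound.
have card_lt : #|endpoints A :\ a :\ b| < m := leq_trans (card_setD2_lt b ha) hm.
have hab : a <= b by case/andP: (hbound b hb).
rewrite eqE in ha hb hbound; have [hv' hin'] := outer_root hA' ha hb hbound.
suff eq0 : A :\ troot n a b = A' :\ troot n a b by rewrite -(setD1K hv) -(setD1K hv') eq0.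
apply: IH (tail_family_sub (subD1set _ _) hA) (tail_family_sub (subD1set _ _) hA') _.
  by rewrite endpoints_remove_outer // eqE.
by rewrite !endpoints_remove_outer // eqE.
Qed.

Lemma endpoints_notin_J n (J : {set 'I_n}) A : tail_family J A -> endpoints A \subset ~: J.
Proof.
move=> [hg _]; apply/subsetP => o /endpointsP [c [e [hce hv hoce]]].
have [a [b [hab ha hb ev]]] := hg _ hv.
have [/ord_inj ec /ord_inj ee] := troot_inj hce (ltn_ord _) hab (ltn_ord _) ev.
by rewrite inE; case: hoce => ->; rewrite ?ec ?ee.
Qed.

(* ... and every subset of the complement of J is the endpoint set of a tail family:
   nest the interval [min S, max S] around a family for S minus its extremes. *)
Lemma endpoints_surj n (J : {set 'I_n}) (S : {set 'I_n}) : S \subset ~: J ->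
  exists2 A, tail_family J A & endpoints A = S.
Proof.
have [m] := ubnP #|S|; elim: m S => // m IH S hm hS.
have [->|[x hx]] := set_0Vmem S.
  by exists set0; [split => v; rewrite inE | exact: endpoints_set0].
have [a [b [ha hb hbound]]] := set_extremes hx.
have hab : a <= b by case/andP: (hbound b hb).
have [A' hA' eqS'] : exists2 A', tail_family J A' & endpoints A' = S :\ a :\ b.
  apply: IH; last exact: subset_trans (subset_trans (subD1set _ _) (subD1set _ _)) hS.
  exact: leq_trans (card_setD2_lt b ha) hm.
have hin (c e : 'I_n) : c <= e -> troot n c e \in A' -> a < c /\ e < b.
  move=> hce hv; have [hc he] := endpoints_of hv hce; rewrite eqS' !in_setD1 in hc he.
  case/and3P: hc => hcb hca /hbound /andP [hac _].
  case/and3P: he => heb hea /hbound /andP [_ heb'].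
  by move: hca heb; rewrite !eq_ordE; lia.
have notJ o : o \in S -> o \notin J by move/(subsetP hS); rewrite inE.
exists (troot n a b |: A'); last first.
  rewrite endpoints_setU1 // eqS'; apply/setP => o; rewrite !in_setU1 !in_setD1.
  by case: (eqVneq o a) => [->|] //; case: (eqVneq o b) => [->|].
case: hA' => hg hanti; split.
- move=> v /setU1P [->|/hg //]; by exists a, b; split; rewrite ?notJ.
- move=> v w /setU1P [->|hv] /setU1P [->|hw]; rewrite ?eqxx // => ne_vw.
  + have [c [e [hce _ _ ev]]] := hg w hw; rewrite ev in hw *.
    by rewrite rle_troot //; have := hin c e hce hw; lia.
  + have [c [e [hce _ _ ev]]] := hg v hv; rewrite ev in hv *.
    by rewrite rle_troot //; have := hin c e hce hv; lia.
  + exact: hanti.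
Qed.

Lemma sum_card_fibers (T : finType) (X : {set T}) (f : T -> nat) N :
  (forall x, f x < N) -> \sum_(s < N) #|[set x in X | f x == s]| = #|X|.
Proof.
move=> hf; symmetry; rewrite -sum1_card (partition_big (fun x => Ordinal (hf x)) predT) //=.
apply: eq_bigr => s _; rewrite -sum1_card; apply: eq_bigl => x.
by rewrite !inE.
Qed.

Lemma card_tail_families n (J : {set 'I_n}) : 0 < n ->
  #|[set A : {set V n} | J_antichain J A && abelian_set A]| = 2 ^ (n - #|J|).
Proof.
move=> hn; set X := [set A | _].
have hX A : A \in X <-> tail_family J A by rewrite inE; apply: tail_familyP.
have -> : #|X| = #|@endpoints n @: X|.
  by rewrite card_in_imset // => A A' hA hA'; apply: endpoints_inj; apply/hX.
have -> : @endpoints n @: X = powerset (~: J).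
  apply/setP => S; rewrite powersetE; apply/imsetP/idP => [[A hA ->]|hS].
  - by apply: endpoints_notin_J; apply/hX.
  - by have [A hA eqS] := endpoints_surj hS; exists A; [apply/hX | rewrite eqS].
by rewrite card_powerset; have := cardsC J; rewrite card_ord => cardJ; congr (2 ^ _); lia.
Qed.

Theorem mainTheorem11 (n : nat) (hn : 2 <= n) (J : {set 'I_n}) :
  (forall s : nat, 1 <= s ->
     AsJ J s = A1J J s :|: A2J J s /\ [disjoint A1J J s & A2J J s])
  /\ \sum_(0 <= s < #|V n|.+1) #|AsJ J s| = 2 ^ (n - #|J|).
Proof.
have hn0 : 0 < n by lia.
split=> [s hs|]; first by split; [apply: AsJ_split | apply: A1J_A2J_disjoint].
have fiber (s : 'I_#|V n|.+1) :
    AsJ J s = [set A in [set A : {set V n} | J_antichain J A && abelian_set A] | #|A| == s].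
  by apply/setP => A; rewrite !inE andbA.
rewrite big_mkord; under eq_bigr => s _ do rewrite fiber.
rewrite (@sum_card_fibers _ _ (fun A : {set V n} => #|A|)) ?card_tail_families //.
by move=> A; rewrite ltnS max_card.
Qed.
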